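(* Let $G=(V,R,E)$ be a finite bipartite version–record graph whose version graph $\mathbb{G}$ is a DAG (possibly with merges), and let $0<\delta\le1$. Let $\hat{\mathbb{T}}$ be the version tree obtained from $\mathbb{G}$ by keeping, for each version with several incoming edges, only one incoming edge of maximum weight, and let $\hat{G}$ and $\hat R$ be as defined below. Applying LyreSplit with parameter $\delta$ to $\hat{\mathbb{T}}$ (with bipartite graph $\hat{G}$) yields a partition of $V$ whose storage cost is at most $\frac{|R|+|\hat R|}{|R|}(1+\delta)^{\ell}\cdot|R|$ and whose average checkout cost is at most $\frac1\delta\cdot\frac{|E|}{|V|}$; i.e., it is a $\left(\frac{|R|+|\hat R|}{|R|}(1+\delta)^{\ell},\frac1\delta\right)$-approximation, where $\ell$ is the recursion level at which LyreSplit terminates.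
   Context: $(v,r)\in E$ means version $v$ contains record $r$; $R(v)=\{r:(v,r)\in E\}$, $R=\bigcup_vR(v)$. The version graph $\mathbb{G}=(V,\mathbb{E})$ is a DAG whose edges go from a parent version to a derived child version, with weights $w(v_i,v_j)=|R(v_i)\cap R(v_j)|$; every non-root version has at least one parent. $\hat{G}=(V,R\cup\hat R,\hat E)$ is the bipartite graph corresponding to $\hat{\mathbb{T}}$: for a merged version $v_k$, records of $v_k$ not inherited from its retained parent are treated as newly created records in $\hat{\mathbb{T}}$ (even if equal to records of another parent); $\hat R$ is the set of these additional duplicated records, so $\hat G$ has $|R|+|\hat R|$ records and $|\hat E|=|E|$ edges, and each record's set of containing versions is a connected subtree of $\hat{\mathbb{T}}$. LyreSplit on a subtree of $\hat{\mathbb T}$ with version set $V'$, record set $R'$ (records of $\hat G$ in versions of $V'$) and edge count $|E'|$: if $|R'||V'|<|E'|/\delta$ return $V'$ as one block; otherwise remove any tree edge $e$ of the subtree with $w(e)\le\delta|R'|$ (weights computed in $\hat G$) and recurse on the two resulting subtrees. The initial call is at recursion level $0$; $\ell$ is the largest level reached. The storage cost of a partition $\mathcal{V}_1,\dots,\mathcal{V}_K$ is $\sum_k|\mathcal{R}_k|$ and the average checkout cost is $\frac1{|V|}\sum_k|\mathcal{V}_k||\mathcal{R}_k|$, where $\mathcal{R}_k$ is the set of records contained in versions of $\mathcal{V}_k$. An $(X,Y)$-approximation has storage cost at most $X|R|$ and average checkout cost at most $Y\frac{|E|}{|V|}$. *)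

From HB Require Import structures.
From mathcomp Require Import all_boot all_order all_algebra.
Set Implicit Arguments. Unset Strict Implicit. Unset Printing Implicit Defensive.
Import Order.TTheory GRing.Theory Num.Theory.

Section VersionGraphs.

(* V : versions, Rc : records, E v r : version v contains record r *)
Variables (V Rc : finType) (E : V -> Rc -> bool).

Definition recs_of (v : V) : {set Rc} := [set r | E v r].
Definition all_recs : {set Rc} := [set r | [exists v, E v r]].
Definition all_edges : {set V * Rc} := [set vr | E vr.1 vr.2].
Definition weight (vi vj : V) : nat := #|recs_of vi :&: recs_of vj|.

Definition block_recs (B : {set V}) : {set Rc} := [set r | [exists v in B, E v r]].
Definition storage_cost (P : seq {set V}) : nat :=
  \sum_(B <- P) #|block_recs B|.
Definition checkout_cost (K : numFieldType) (P : seq {set V}) : K :=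
  ((\sum_(B <- P) (#|B| * #|block_recs B|)%:R) / #|V|%:R)%R.

(* par : the retained parent of each version in the tree \hat T *)
Variable par : V -> option V.

Definition up_step (r : Rc) (v : V) : V :=
  match par v with
  | Some p => if E p r then p else v
  | None => v
  end.
(* origin(v, r): the version of \hat T where the copy of r held by v was
   (newly) created; (origin v r, r) identifies a record of \hat G. *)
Definition origin (v : V) (r : Rc) : V := iter #|V| (up_step r) v.

Definition hrecs_of (v : V) : {set V * Rc} :=
  [set (origin v r, r) | r in recs_of v].
(* all records of \hat G : R \cup \hat R *)
Definition hall_recs : {set V * Rc} := \bigcup_(v : V) hrecs_of v.
Definition hweight (vi vj : V) : nat := #|hrecs_of vi :&: hrecs_of vj|.
Definition sub_recs (V' : {set V}) : {set V * Rc} := \bigcup_(v in V') hrecs_of v.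
Definition sub_edges (V' : {set V}) : {set V * Rc} :=
  [set vr | (vr.1 \in V') && E vr.1 vr.2].

Definition tree_rel_minus (V' : {set V}) (p c : V) : rel V :=
  fun x y => [&& x \in V', y \in V',
               (par y == Some x) || (par x == Some y)
             & ~~ (((x == p) && (y == c)) || ((x == c) && (y == p)))].
Definition side_child (V' : {set V}) (p c : V) : {set V} :=
  [set x in V' | connect (tree_rel_minus V' p c) c x].
Definition side_parent (V' : {set V}) (p c : V) : {set V} :=
  V' :\: side_child V' p c.

Variables (K : realFieldType) (delta : K).
Local Open Scope ring_scope.

(* lyre V' k P l : the call of LyreSplit on the subtree V' at recursion
   level k can return the blocks P, the largest recursion level reached
   during this call being l.  (LyreSplit is nondeterministic.) *)
Inductive lyre : {set V} -> nat -> seq {set V} -> nat -> Prop :=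
| lyre_stop (V' : {set V}) (k : nat) :
    (#|sub_recs V'| * #|V'|)%:R < #|sub_edges V'|%:R / delta ->
    lyre V' k [:: V'] k
| lyre_split (V' : {set V}) (k : nat) (p c : V)
    (P1 P2 : seq {set V}) (l1 l2 : nat) :
    ~~ ((#|sub_recs V'| * #|V'|)%:R < #|sub_edges V'|%:R / delta) ->
    p \in V' -> c \in V' -> par c = Some p ->
    (hweight p c)%:R <= delta * #|sub_recs V'|%:R ->
    lyre (side_parent V' p c) k.+1 P1 l1 ->
    lyre (side_child V' p c) k.+1 P2 l2 ->
    lyre V' k (P1 ++ P2) (maxn l1 l2).

End VersionGraphs.

From HB Require Import structures.
From mathcomp Require Import all_boot all_order all_algebra zify.
Set Implicit Arguments. Unset Strict Implicit. Unset Printing Implicit Defensive.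
Import Order.TTheory GRing.Theory Num.Theory.

(* Each call of LyreSplit either stops, with |R'||V'| < |E'|/delta, or cuts its
   subtree at a tree edge (p, c) into two subtrees whose edge sets partition
   E'; summing over the leaves of the recursion gives the checkout bound.
   For storage, the versions containing a record of \hat G form a subtree of
   \hat T hanging from the version where that record was created.  Since the
   subtrees met during the recursion are convex (they contain the tree path
   between any two of their versions lying on a common root path), the two
   sides of a cut can only share records held by both p and c, so
   |R'_1| + |R'_2| <= |R'| + w(p, c) <= (1 + delta) |R'|.  Each level thus
   costs a factor 1 + delta, starting from |R| + |\hat R| records. *)

Lemma connect_preserve (T : finType) (e : rel T) (Q : T -> Prop) x y :
  (forall a b, e a b -> Q a -> Q b) -> connect e x y -> Q x -> Q y.
Proof.
move=> eQ /connectP[s]; elim: s x => [|z s IHs] x /=; first by move=> _ ->.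
by case/andP=> exz /IHs{}IHs yz Qx; apply: IHs (eQ _ _ exz Qx).
Qed.

Section Forest.

Variables (V : finType) (par : V -> option V).

Definition parf (v : V) : V := odflt v (par v).

Lemma parf_Some v p : par v = Some p -> parf v = p.
Proof. by rewrite /parf => ->. Qed.

Lemma parf_acyclic (parent : rel V) :
    (forall u v, parent u v -> ~~ connect parent v u) ->
    (forall v p, par v = Some p -> parent p v) ->
  forall v p, par v = Some p -> ~~ fconnect parf p v.
Proof.
move=> dag par_parent v p vp; apply: contraNN (dag _ _ (par_parent _ _ vp)) => pv.
suff: connect [rel x y | parent y x] p v by rewrite connect_rev.
apply: connect_sub pv => x y /eqP <-{y}; rewrite /parf.
by case xq: (par x) => [q|] /=; [apply: connect1; apply: par_parent | apply: connect0].
Qed.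

Hypothesis par_acyclic : forall v p, par v = Some p -> ~~ fconnect parf p v.

(* [order parf v] counts the ancestors of [v], [v] included. *)
Lemma order_par v p : par v = Some p -> order parf p < order parf v.
Proof.
move=> vp; apply/proper_card/properP; split.
  apply/subsetP=> u; apply: connect_trans.
  by rewrite -(parf_Some vp); apply: fconnect1.
by exists v; [apply: connect0 | apply: par_acyclic].
Qed.

Lemma par_asym v p : par v = Some p -> par p != Some v.
Proof.
move=> vp; apply/eqP=> pv.
by have := ltn_trans (order_par vp) (order_par pv); rewrite ltnn.
Qed.

Lemma iter_card_fixed (f : V -> V) :
    (forall z, f z != z -> par z = Some (f z)) ->
  forall y, f (iter #|V| f y) = iter #|V| f y.
Proof.
move=> f_par y; set h := order parf.
have descent j : f (iter j f y) = iter j f y \/ h (iter j f y) + j <= h y.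
  elim: j => [|j [fixed | IHj]]; [by right; rewrite addn0 | by left; rewrite /= fixed |].
  have [fixed | moved] := eqVneq (f (iter j f y)) (iter j f y).
    by left; rewrite /= fixed.
  right; rewrite addnS; apply: leq_trans IHj.
  by rewrite ltn_add2r; exact: order_par (f_par _ moved).
have [// | low] := descent #|V|; apply/eqP; apply/negPn/negP=> moved.
have hy : h y <= #|V| := max_card _.
have := order_par (f_par _ moved); rewrite -/h; lia.
Qed.

Definition climbs (A : {set V}) (x y : V) :=
  exists2 i, iter i parf x = y & forall k, k <= i -> iter k parf x \in A.

Definition path_convex (A : {set V}) :=
  forall x i, x \in A -> iter i parf x \in A -> forall k, k <= i -> iter k parf x \in A.

Lemma path_convexT : path_convex [set: V].
Proof. by move=> *; rewrite inE. Qed.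

Lemma climbs_refl (A : {set V}) x : x \in A -> climbs A x x.
Proof. by move=> xA; exists 0 => // k; rewrite leqn0 => /eqP->. Qed.

Lemma climbs_parent (A : {set V}) x q : par x = Some q -> x \in A -> q \in A -> climbs A x q.
Proof. by move=> xq xA qA; exists 1 => [|[|[]]] //=; rewrite (parf_Some xq). Qed.

Lemma climbs_trans (A : {set V}) x y z : climbs A x y -> climbs A y z -> climbs A x z.
Proof.
move=> [i <- xA] [j <- yA]; exists (j + i); first by rewrite iterD.
move=> k le_k; have [/xA // | lt_ik] := leqP k i.
by rewrite -(subnK (ltnW lt_ik)) iterD; apply: yA; rewrite leq_subLR addnC.
Qed.

Lemma climbs_behead (A : {set V}) x y : climbs A x y -> x != y -> climbs A (parf x) y.
Proof.
case=> -[|i] <- xA; first by rewrite eqxx.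
by exists i => [|k le_ki]; rewrite -iterSr //; apply: xA.
Qed.

Lemma climbs_sub (A B : {set V}) x y : A \subset B -> climbs A x y -> climbs B x y.
Proof. by move/subsetP=> AB [i xy xA]; exists i => // k /xA /AB. Qed.

Lemma climbs_end (A : {set V}) x y : climbs A x y -> y \in A.
Proof. by case=> i <-; apply. Qed.

Section Cut.

Variables (A : {set V}) (p c : V).
Hypothesis cp : par c = Some p.

Local Notation child := (side_child par A p c).
Local Notation parent_side := (side_parent par A p c).

Lemma side_child_subset : child \subset A.
Proof. by apply/subsetP=> x; rewrite inE => /andP[]. Qed.

Lemma side_child_climbs x : x \in child -> climbs child x c.
Proof.
rewrite inE => /andP[xA cx]; move: xA.
pose Q y := y \in A -> climbs child y c.
apply: (@connect_preserve _ _ Q _ _ _ cx) => [a b ab IHa _ | cA].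
  have /and4P[aA bA ab_tree ab_kept] := ab.
  have [i ac aC] := IHa aA.
  have bC : b \in child.
    have := aC 0 (leq0n i); rewrite !inE bA => /andP[_ ca].
    exact: connect_trans ca (connect1 ab).
  case/orP: ab_tree => /eqP ab_par.
    exact: climbs_trans (climbs_parent ab_par bC (aC 0 (leq0n i))) (ex_intro2 _ _ i ac aC).
  rewrite -(parf_Some ab_par); apply: climbs_behead; first by exists i.
  by apply: contraNneq ab_kept => ac'; move: ab_par; rewrite ac' cp => -[->]; rewrite !eqxx orbT.
by apply: climbs_refl; rewrite inE cA connect0.
Qed.

Lemma climbs_side_child x : climbs A x c -> x \in child.
Proof.
case=> i; elim: i x => [|i IHi] x xc xA.
  by move: xc xA => /= -> cA; rewrite inE (cA 0 (leqnn 0)) connect0.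
have [-> | xNc] := eqVneq x c.
  by rewrite inE connect0 andbT -{1}xc xA.
have qC : parf x \in child.
  by apply: IHi => [|k le_ki]; rewrite -iterSr ?xc //; apply: xA.
case xq: (par x) => [q|]; last by rewrite /parf xq in qC.
rewrite (parf_Some xq) inE in qC; case/andP: qC => qA cq.
rewrite inE (xA 0 (leq0n _)); apply: connect_trans cq (connect1 _).
rewrite /tree_rel_minus qA (xA 0 (leq0n _)) xq eqxx (negbTE xNc) andbF /=.
apply/andP=> -[/eqP qc /eqP xp]; move: xq (par_asym cp).
by rewrite qc xp => ->; rewrite eqxx.
Qed.

Hypothesis A_convex : path_convex A.

Lemma side_child_desc x i : x \in A -> iter i parf x \in child -> x \in child.
Proof.
move=> xA iC; have iA := subsetP side_child_subset _ iC.
apply/climbs_side_child/(climbs_trans _ (climbs_sub side_child_subset (side_child_climbs iC))).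
by exists i => // k; exact: (A_convex xA iA).
Qed.

Lemma path_convex_side_child : path_convex child.
Proof.
move=> x i /(subsetP side_child_subset) xA iC k le_ki.
have iA := subsetP side_child_subset _ iC.
by apply: (@side_child_desc _ (i - k)); rewrite ?(A_convex xA iA le_ki) // -iterD subnK.
Qed.

Lemma path_convex_side_parent : path_convex parent_side.
Proof.
move=> x i + + k le_ki; rewrite /side_parent !in_setD => /andP[xNC xA] /andP[_ iA].
by rewrite (A_convex xA iA le_ki) andbT (contra (side_child_desc xA) xNC).
Qed.

End Cut.

End Forest.

Section Records.

Variables (V Rc : finType) (E : V -> Rc -> bool) (par : V -> option V).
Hypothesis par_acyclic : forall v p, par v = Some p -> ~~ fconnect (parf par) p v.

Lemma mem_hrecs v o r : ((o, r) \in hrecs_of E par v) = E v r && (origin E par v r == o).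
Proof.
apply/imsetP/andP => [[r' + [-> ->]] | [vr /eqP <-]]; first by rewrite inE => ->; rewrite eqxx.
by exists r; rewrite ?inE.
Qed.

Lemma up_step_moved r z : up_step E par r z != z ->
  par z = Some (up_step E par r z) /\ E (up_step E par r z) r.
Proof.
rewrite /up_step; case: (par z) => [q|]; last by rewrite eqxx.
by case qr: (E q r); rewrite ?eqxx.
Qed.

Lemma origin_fixed v r : up_step E par r (origin E par v r) = origin E par v r.
Proof. by apply: (iter_card_fixed par_acyclic) => z /up_step_moved[]. Qed.

Lemma origin_up_step v r : origin E par (up_step E par r v) r = origin E par v r.
Proof. by rewrite /origin -iterSr iterS; apply: origin_fixed. Qed.

Lemma origin_ancestor v r : exists m, origin E par v r = iter m (parf par) v.
Proof.
rewrite /origin; elim: #|V| => [|n [m IHn]]; first by exists 0.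
rewrite iterS IHn; set z := iter m _ v.
have [fixed | /up_step_moved[moved _]] := eqVneq (up_step E par r z) z.
  by exists m; rewrite fixed.
by exists m.+1; rewrite iterS -(parf_Some moved).
Qed.

Lemma hrecs_parent z o r : (o, r) \in hrecs_of E par z -> z != o ->
  exists2 q, par z = Some q & (o, r) \in hrecs_of E par q.
Proof.
rewrite !mem_hrecs => /andP[zr /eqP <-] zNo.
have /up_step_moved[zq qr] : up_step E par r z != z.
  by apply: contraNneq zNo => fixed; rewrite /origin iter_fix.
by exists (up_step E par r z); rewrite // mem_hrecs qr origin_up_step eqxx.
Qed.

Lemma hrecs_climbs (A : {set V}) x y o r : (o, r) \in hrecs_of E par x ->
  climbs par A x y -> o \notin A -> (o, r) \in hrecs_of E par y.
Proof.
move=> xr [i <- xA] oNA; elim: i x xr xA => [|i IHi] x xr xA //.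
have [|q xq qr] := hrecs_parent xr; first by apply: contraNneq oNA => <-; exact: (xA 0).
rewrite iterSr (parf_Some xq); apply: IHi => // k le_ki.
by rewrite -(parf_Some xq) -iterSr; apply: xA.
Qed.

Lemma hrecs_shared_across_cut (A : {set V}) p c : path_convex par A -> par c = Some p ->
  sub_recs E par (side_parent par A p c) :&: sub_recs E par (side_child par A p c)
  \subset hrecs_of E par p :&: hrecs_of E par c.
Proof.
move=> A_convex cp; apply/subsetP => -[o r] /setIP[/bigcupP[u uP ur] /bigcupP[w wC wr]].
have wc := side_child_climbs cp wC.
have oNC : o \notin side_child par A p c.
  have [m om] := origin_ancestor u r.
  move: uP ur; rewrite /side_parent in_setD mem_hrecs => /andP[uNC uA] /andP[_ /eqP ou].
  by apply: contra uNC; rewrite -ou om; apply: side_child_desc.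
have cr := hrecs_climbs wr wc oNC.
have [|q] := hrecs_parent cr; first by apply: contraNneq oNC => <-; apply: climbs_end wc.
by rewrite cp => -[<-] pr; rewrite inE pr cr.
Qed.

End Records.

Section Costs.

Variables (V Rc : finType) (E : V -> Rc -> bool) (par : V -> option V).
Variables (K : realFieldType) (delta : K).
Local Open Scope ring_scope.

Lemma sub_recs_cut (A : {set V}) p c :
  sub_recs E par (side_parent par A p c) :|: sub_recs E par (side_child par A p c) =
  sub_recs E par A.
Proof.
rewrite /sub_recs -bigcup_setU setUC -[X in X :|: _](setIidPr (side_child_subset par A p c)).
by rewrite setID.
Qed.

Lemma card_sub_edges_cut (A : {set V}) p c :
  (#|sub_edges E (side_parent par A p c)| + #|sub_edges E (side_child par A p c)|)%N =
  #|sub_edges E A|.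
Proof.
set EP := sub_edges E _; set EC := sub_edges E _.
have disj : EP :&: EC = set0.
  by apply/setP=> -[v r]; rewrite !inE /=; case: (v \in A) (connect _ c v) => [] []; rewrite ?andbF.
rewrite -cardsUI disj cards0 addn0; apply: eq_card => -[v r].
by rewrite !inE /=; case: (v \in A) (connect _ c v) (E v r) => [] [] [].
Qed.

Lemma card_block_recs_le (B : {set V}) : (#|block_recs E B| <= #|sub_recs E par B|)%N.
Proof.
apply: leq_trans (leq_imset_card (fun x : V * Rc => x.2) _); apply/subset_leq_card/subsetP.
move=> r; rewrite inE => /existsP[v /andP[vB vr]]; apply/imsetP.
by exists (origin E par v r, r) => //; apply/bigcupP; exists v; rewrite // mem_hrecs vr eqxx.
Qed.

Lemma lyre_checkout A k P l : lyre E par delta A k P l ->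
  (\sum_(B <- P) #|B| * #|sub_recs E par B|)%:R <= #|sub_edges E A|%:R / delta.
Proof.
elim=> {A k P l} [A k stop | A k p c P1 P2 l1 l2 _ _ _ _ _ _ IH1 _ IH2].
  by rewrite big_seq1 mulnC ltW.
by rewrite big_cat -(card_sub_edges_cut A p c) !natrD mulrDl lerD.
Qed.

Hypothesis delta_gt0 : 0 < delta.
Hypothesis par_acyclic : forall v p, par v = Some p -> ~~ fconnect (parf par) p v.

Lemma lyre_storage A k P l : lyre E par delta A k P l -> path_convex par A ->
  (\sum_(B <- P) #|sub_recs E par B|)%:R * (1 + delta) ^+ k <=
  #|sub_recs E par A|%:R * (1 + delta) ^+ l.
Proof.
elim=> {A k P l} [A k _ _ | A k p c P1 P2 l1 l2 _ _ _ cp w_le _ IH1 _ IH2 A_convex].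
  by rewrite big_seq1.
set q := 1 + delta; set L := maxn l1 l2.
set a := #|sub_recs E par A|.
set a1 := #|sub_recs E par (side_parent par A p c)|.
set a2 := #|sub_recs E par (side_child par A p c)|.
have q_ge1 : 1 <= q by rewrite lerDl ltW.
have q_gt0 : 0 < q by apply: lt_le_trans q_ge1.
have bound1 : (\sum_(B <- P1) #|sub_recs E par B|)%:R * q ^+ k * q <= a1%:R * q ^+ L.
  rewrite -mulrA -exprSr; apply: le_trans (IH1 (path_convex_side_parent par_acyclic cp A_convex)) _.
  by rewrite ler_wpM2l // ler_weXn2l // leq_maxl.
have bound2 : (\sum_(B <- P2) #|sub_recs E par B|)%:R * q ^+ k * q <= a2%:R * q ^+ L.
  rewrite -mulrA -exprSr; apply: le_trans (IH2 (path_convex_side_child par_acyclic cp A_convex)) _.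
  by rewrite ler_wpM2l // ler_weXn2l // leq_maxr.
have shared : (a1 + a2 <= a + hweight E par p c)%N.
  rewrite -cardsUI sub_recs_cut leq_add2l subset_leq_card //.
  exact: (hrecs_shared_across_cut E par_acyclic A_convex cp).
have cut_le : a1%:R + a2%:R <= a%:R * q.
  rewrite -natrD (le_trans (_ : _ <= (a + hweight E par p c)%:R)) ?ler_nat //.
  by rewrite natrD mulrDr mulr1 lerD2l mulrC.
rewrite -(ler_pM2r q_gt0) big_cat natrD !mulrDl (le_trans (lerD bound1 bound2)) //.
by rewrite -mulrDl mulrAC; apply: ler_wpM2r cut_le; rewrite exprn_ge0 // ltW.
Qed.

Lemma storage_cost_le P l : lyre E par delta [set: V] 0 P l ->
  (storage_cost E P)%:R <= #|hall_recs E par|%:R * (1 + delta) ^+ l.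
Proof.
move=> run; have := lyre_storage run (@path_convexT _ par).
rewrite expr0 mulr1 (_ : sub_recs E par _ = hall_recs E par); last first.
  by apply: eq_bigl => v; rewrite inE.
apply: le_trans; rewrite ler_nat.
by apply: leq_sum => B _; apply: card_block_recs_le.
Qed.

Lemma checkout_cost_le P l : lyre E par delta [set: V] 0 P l ->
  checkout_cost E K P <= delta^-1 * (#|all_edges E|%:R / #|V|%:R).
Proof.
move=> run; rewrite /checkout_cost mulrA [delta^-1 * _]mulrC.
rewrite ler_wpM2r ?invr_ge0 ?ler0n //.
have -> : all_edges E = sub_edges E [set: V] by apply/setP=> vr; rewrite !inE.
apply: le_trans _ (lyre_checkout run); rewrite -natr_sum ler_nat.
by apply: leq_sum => B _; rewrite leq_mul // card_block_recs_le.
Qed.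

End Costs.

Local Open Scope ring_scope.

Theorem theorem3
  (K : realFieldType) (V Rc : finType) (E : V -> Rc -> bool)
  (parent : rel V) (par : V -> option V) (delta : K)
  (* the version graph is a DAG *)
  (Hdag : forall u v, parent u v -> ~~ connect parent v u)
  (* with a single root; every non-root version has a parent *)
  (Hroot : exists r0 : V, forall v, (~~ [exists u, parent u v]) = (v == r0) :> bool)
  (* \hat T keeps, for each version with parents, one incoming edge of
     maximum weight *)
  (Hpar_none : forall v, par v = None <-> ~~ [exists u, parent u v])
  (Hpar_some : forall v p, par v = Some p ->
       parent p v /\ (forall q, parent q v -> (weight E q v <= weight E p v)%N))
  (Hdelta : 0 < delta <= 1)
  (P : seq {set V}) (l : nat)
  (Hrun : lyre E par delta [set: V] 0 P l) :
  let nR := #|all_recs E|%:R : K in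
  let nRhat := #|hall_recs E par|%:R - nR : K in
  (storage_cost E P)%:R <= (nR + nRhat) / nR * (1 + delta) ^+ l * nR /\
  checkout_cost E K P <= delta^-1 * (#|all_edges E|%:R / #|V|%:R).
Proof.
move=> nR nRhat.
have par_acyclic := parf_acyclic Hdag (fun v p vp => (Hpar_some v p vp).1).
have delta_gt0 : 0 < delta by case/andP: Hdelta.
split; last exact: checkout_cost_le Hrun.
have storage_le := storage_cost_le delta_gt0 par_acyclic Hrun.
rewrite /nRhat addrC subrK; have [nR0 | nR_neq0] := eqVneq nR 0; last first.
  by rewrite mulrAC divfK.
suff -> : storage_cost E P = 0%N by rewrite nR0 !mulr0.
have /eqP := nR0; rewrite pnatr_eq0 cards_eq0 => /eqP no_recs.
rewrite /storage_cost big1_seq // => B _; apply/eqP; rewrite cards_eq0 -subset0 -no_recs.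
by apply/subsetP=> r; rewrite !inE => /existsP[v /andP[_ vr]]; apply/existsP; exists v.
Qed.
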